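(* Let $n\ge3$ be odd and let $M$ be the sub-add move matrix. Then the length of every directed cycle in $\Gamma_{M,\,n}$ divides $4\varphi(n)$, where $\varphi$ is Euler's totient function.
   Context: The sub-add move matrix is $M=\begin{pmatrix}1&-1\\1&1\end{pmatrix}$. For $n\in\mathbb N$, $\Gamma_{M,\,n}$ is the directed graph with vertex set $\mathbb Z_n^2$ and arcs $((a,b),(a-b,a+b))$ for all $(a,b)\in\mathbb Z_n^2$ (computed mod $n$; loops allowed). A directed cycle is a cycle in the underlying undirected graph such that in the induced directed subgraph every vertex has in-degree and out-degree $1$; a loop counts as a directed $1$-cycle and a pair of opposite arcs as a directed $2$-cycle. *)

From mathcomp Require Import all_boot all_order all_algebra.
Set Implicit Arguments. Unset Strict Implicit. Unset Printing Implicit Defensive.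
Import GRing.Theory.
Local Open Scope ring_scope.

(* Vertex set Z_n^2 (use only for n >= 2, so that 'Z_n is Z/nZ). *)
(* The sub-add move M = [[1,-1],[1,1]] : (a,b) |-> (a - b, a + b) mod n. *)
Definition subadd_move (n : nat) (v : 'Z_n * 'Z_n) : 'Z_n * 'Z_n :=
  (v.1 - v.2, v.1 + v.2).

Definition Gamma_arc (n : nat) : rel ('Z_n * 'Z_n) :=
  fun u v => subadd_move u == v.

(* A directed cycle of Gamma_{M,n}: a nonempty sequence of pairwise distinct
   vertices v_0, ..., v_{k-1} with arcs v_i -> v_{i+1} and v_{k-1} -> v_0
   (k = 1 is a loop, k = 2 a pair of opposite arcs). *)
Definition directed_cycle (n : nat) (c : seq ('Z_n * 'Z_n)) : bool :=
  [&& c != [::], uniq c & cycle (@Gamma_arc n) c].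

(* Since M^2 = [[0,-2],[2,0]], we get M^4 = -4 I. For odd n the residue -4 is
   a unit of Z/nZ, so by Euler's theorem (-4)^phi(n) = 1 and M^(4 phi(n)) is the
   identity on Z_n^2. Every vertex is thus fixed by 4 phi(n) moves, and the
   length of a directed cycle through it, which is its orbit length under the
   move, divides 4 phi(n). *)

From mathcomp Require Import all_boot all_order all_algebra.
From mathcomp Require Import cyclic ring.

Set Implicit Arguments.
Unset Strict Implicit.
Unset Printing Implicit Defensive.

Import GRing.Theory.

Lemma fcycle_size_dvdn_iter (T : finType) (f : T -> T) (c : seq T) (x : T)
    (m : nat) :
  fcycle f c -> uniq c -> x \in c -> iter m f x = x -> size c %| m.
Proof.
move=> f_c uniq_c c_x fix_m; rewrite -(order_cycle f_c uniq_c c_x).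
have fix_mul q : iter (q * order f x) f x = x.
  elim: q => [|q IHq]; rewrite ?mul0n // mulSn iterD IHq.
  exact: (iter_order_cycle f_c c_x c_x).
have fix_mod : iter (m %% order f x) f x = x.
  by move: fix_m; rewrite {1}(divn_eq m (order f x)) addnC iterD fix_mul.
have mod_lt_order : m %% order f x < order f x by rewrite ltn_mod order_gt0.
by have := findex_iter mod_lt_order; rewrite fix_mod findex0 => /esym/eqP.
Qed.

Local Open Scope ring_scope.

Lemma Zp_unit_exp_totient (n : nat) (u : 'Z_n) :
  (1 < n)%N -> u \is a GRing.unit -> u ^+ totient n = 1.
Proof.
move=> n_gt1 u_unit.
have co_u_n : coprime u n by rewrite coprime_sym -unitZpE // natr_Zp.
rewrite -(natr_Zp u) -natrX -Zp_nat_mod // Euler_exp_totient //.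
by rewrite Zp_nat_mod.
Qed.

Lemma Zp_unit_4 (n : nat) : (1 < n)%N -> odd n -> (4 : 'Z_n) \is a GRing.unit.
Proof.
move=> n_gt1 n_odd.
by rewrite unitZpE // -[4%N]/(2 ^ 2)%N coprime_pexpr ?coprimen2.
Qed.

Lemma iter4_subadd_move (n : nat) (v : 'Z_n * 'Z_n) :
  iter 4 (@subadd_move n) v = (-4 * v.1, -4 * v.2).
Proof. by case: v => a b; rewrite /subadd_move /=; congr (_, _); ring. Qed.

Lemma iter_mul4_subadd_move (n : nat) (v : 'Z_n * 'Z_n) (j : nat) :
  iter (4 * j) (@subadd_move n) v = ((-4) ^+ j * v.1, (-4) ^+ j * v.2).
Proof.
elim: j => [|j IHj]; first by case: v => a b; rewrite /= !mul1r.
by rewrite mulnS iterD IHj iter4_subadd_move /= !exprS !mulrA.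
Qed.

Lemma iter_4totient_subadd_move (n : nat) (v : 'Z_n * 'Z_n) :
  (1 < n)%N -> odd n -> iter (4 * totient n) (@subadd_move n) v = v.
Proof.
move=> n_gt1 n_odd.
rewrite iter_mul4_subadd_move Zp_unit_exp_totient ?unitrN ?Zp_unit_4 //.
by rewrite !mul1r; case: v.
Qed.

Theorem theorem6p2 (n : nat) (hn : (3 <= n)%N) (hodd : odd n)
  (c : seq ('Z_n * 'Z_n)) (hc : directed_cycle c) :
  (size c %| 4 * totient n)%N.
Proof.
case/and3P: hc; case: c => [//|x p] _ uniq_c cycle_c.
have fcycle_c : fcycle (@subadd_move n) (x :: p) := cycle_c.
apply: (fcycle_size_dvdn_iter fcycle_c uniq_c (mem_head x p)).
exact/iter_4totient_subadd_move/hodd/ltnW.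
Qed.
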